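(* (1) For every integer $n\ge 0$, the polynomials $B_n(t)$ and $B_{n+1}(t)$ are coprime in $\mathbb{Z}[t]$, i.e. $\gcd(B_n(t),B_{n+1}(t))=1$. (2) If $a,b$ are odd positive integers with $a+b=2^{n}$ for some $n$, then $\gcd(B_a(t),B_b(t))=1$.
   Context: The Stern polynomials $B_n(t)\in\mathbb{Z}[t]$, $n\ge 0$, are defined by $B_0(t)=0$, $B_1(t)=1$, $B_{2n}(t)=tB_n(t)$ and $B_{2n+1}(t)=B_n(t)+B_{n+1}(t)$ for $n\ge 1$. *)

From HB Require Import structures.
From mathcomp Require Import all_boot all_order all_algebra.
Set Implicit Arguments. Unset Strict Implicit. Unset Printing Implicit Defensive.
Import Order.TTheory GRing.Theory Num.Theory.
Local Open Scope ring_scope.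

(* Defined with fuel k; k = n.+1 is always enough since n./2 < n and
   (n./2).+1 < n for odd n >= 3. *)
Fixpoint stern_aux (k n : nat) : {poly int} :=
  match k with
  | 0%N => 0
  | k'.+1 =>
      if n == 0%N then 0
      else if n == 1%N then 1
      else if odd n then stern_aux k' n./2 + stern_aux k' (n./2).+1
      else 'X * stern_aux k' n./2
  end.

Definition stern (n : nat) : {poly int} := stern_aux n.+1 n.

(* Divisibility in Z[t] (genuinely in Z[t], not the pseudo-division of polydiv). *)
Definition zdivides (d p : {poly int}) : Prop := exists u : {poly int}, p = d * u.

Definition zcoprime (p q : {poly int}) : Prop :=
  forall d : {poly int}, zdivides d p -> zdivides d q -> d \is a GRing.unit.

Example stern_small :
  [/\ stern 0 = 0, stern 1 = 1, stern 2 = 'X, stern 3 = 1 + 'X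
    & stern 5 = 'X + (1 + 'X)].
Proof. by rewrite /stern /= ?addr0 ?add0r ?mulr0 ?mulr1. Qed.

From mathcomp Require Import all_boot all_order all_algebra.
From mathcomp Require Import zify ring.
Set Implicit Arguments. Unset Strict Implicit. Unset Printing Implicit Defensive.
Import GRing.Theory.
Local Open Scope ring_scope.

(* Every B_n with n odd has constant term 1, so a common divisor d of B_n and
   any other polynomial has d(0) != 0, and a factor t can then be cancelled.
   (1) follows by descent along B_{2m} = t B_m and B_{2m+1} = B_m + B_{m+1}.
   For (2), write a = 2m+1 and b = 2m'+1: the cross term
   B_{m+1} B_{m'+1} - B_m B_{m'} is a Z[t]-combination of B_a and B_b, and it
   equals t^k when m + m' + 1 = 2^k: up to symmetry (m, m') = (2j, 2j'+1),
   the cross term there is t times the one at (j, j'), and j + j' + 1 = 2^(k-1). *)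

Lemma stern_auxS k n : stern_aux k.+1 n =
  if n == 0%N then 0
  else if n == 1%N then 1
  else if odd n then stern_aux k n./2 + stern_aux k n./2.+1
  else 'X * stern_aux k n./2.
Proof. by []. Qed.

Lemma stern_aux_fuel k1 k2 n :
  (n < k1)%N -> (n < k2)%N -> stern_aux k1 n = stern_aux k2 n.
Proof.
elim: k1 k2 n => [|k1 IH] [|k2] n // lt1 lt2; rewrite !stern_auxS.
case: eqP => // /eqP n0; case: eqP => // /eqP n1.
by case: ifP => oddn; rewrite ?(IH k2) //; lia.
Qed.

Lemma stern_auxE k n : (n < k)%N -> stern_aux k n = stern n.
Proof. by move=> ltnk; apply: stern_aux_fuel. Qed.

Lemma stern0 : stern 0 = 0. Proof. by []. Qed.
Lemma stern1 : stern 1 = 1. Proof. by []. Qed.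

Lemma sternE n : (1 < n)%N ->
  stern n = if odd n then stern n./2 + stern n./2.+1 else 'X * stern n./2.
Proof.
move=> lt1n; rewrite {1}/stern stern_auxS.
have [n0 n1] : n != 0%N /\ n != 1%N by lia.
rewrite (negPf n0) (negPf n1).
have half_lt : (n./2 < n)%N by lia.
case: ifP => oddn; last by rewrite stern_auxE.
have halfS_lt : (n./2.+1 < n)%N by lia.
by rewrite !stern_auxE.
Qed.

Lemma stern_double n : stern n.*2 = 'X * stern n.
Proof.
case: n => [|n]; first by rewrite mulr0.
by rewrite (sternE (n := n.+1.*2)) ?odd_double ?doubleK //; lia.
Qed.

Lemma stern_doubleS n : stern n.*2.+1 = stern n + stern n.+1.
Proof.
case: n => [|n]; first by rewrite add0r.
have half_doubleS : (n.+1.*2.+1)./2 = n.+1 by lia.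
by rewrite (sternE (n := n.+1.*2.+1)) ?oddS ?odd_double ?half_doubleS //; lia.
Qed.

Lemma stern_horner0 n : (stern n).[0] = (odd n)%:R.
Proof.
elim/ltn_ind: n => n IH; rewrite -(odd_double_half n).
case: (odd n) (odd_double_half n); move: n./2 => m en; last first.
  by rewrite add0n stern_double hornerM hornerX mul0r odd_double.
case: m en => [|m] en; first by rewrite stern1 hornerC.
by rewrite add1n stern_doubleS hornerD !IH /= ?odd_double ?negbK;
  [case: (odd m) | lia..].
Qed.

Lemma zdividesB d p q : zdivides d p -> zdivides d q -> zdivides d (p - q).
Proof. by move=> [u ->] [v ->]; exists (u - v); rewrite mulrBr. Qed.

Lemma zdividesMr d p q : zdivides d p -> zdivides d (p * q).
Proof. by move=> [u ->]; exists (u * q); rewrite mulrA. Qed.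

Lemma zdivides1_unit d : zdivides d 1 -> d \is a GRing.unit.
Proof. by move=> [u du]; apply/unitrPr; exists u. Qed.

Lemma zdivides_horner0_neq0 d p : zdivides d p -> p.[0] != 0 -> d.[0] != 0.
Proof. by move=> [u ->]; rewrite hornerM; apply: contraNneq => ->; rewrite mul0r. Qed.

Lemma zdivides_mulXl d q : d.[0] != 0 -> zdivides d ('X * q) -> zdivides d q.
Proof.
move=> d0 [w Xq].
have : (d * w).[0] = 0 by rewrite -Xq hornerM hornerX mul0r.
rewrite hornerM => /eqP; rewrite mulf_eq0 (negPf d0) /= => w0.
have /factor_theorem [w' ew] : root w 0 by [].
exists w'; apply: (@mulIf _ 'X); first by rewrite polyX_eq0.
by rewrite mulrC Xq ew subr0 mulrA.
Qed.

Lemma zdivides_expX_unit d k :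
  d.[0] != 0 -> zdivides d ('X ^+ k) -> d \is a GRing.unit.
Proof.
move=> d0; elim: k => [|k IH]; first exact: zdivides1_unit.
by rewrite exprS => /(zdivides_mulXl d0).
Qed.

Lemma stern_doubleS_divisor_horner0 d m :
  zdivides d (stern m.*2.+1) -> d.[0] != 0.
Proof.
move/zdivides_horner0_neq0; apply.
by rewrite stern_horner0 oddS odd_double oner_neq0.
Qed.

Lemma zcoprime_stern_succ n : zcoprime (stern n) (stern n.+1).
Proof.
elim/ltn_ind: n => n IH d; rewrite -(odd_double_half n).
case: (odd n) (odd_double_half n); move: n./2 => m en.
  rewrite add1n -doubleS stern_double => d_odd d_even.
  have d0 := stern_doubleS_divisor_horner0 d_odd.
  have d_m1 := zdivides_mulXl d0 d_even.
  have d_m : zdivides d (stern m).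
    by rewrite -(addrK (stern m.+1) (stern m)) -stern_doubleS; apply: zdividesB.
  by apply: (IH m) => //; lia.
case: m en => [|m] en; first by rewrite stern1 => _; apply: zdivides1_unit.
rewrite add0n stern_double => d_even d_odd.
have d0 := stern_doubleS_divisor_horner0 d_odd.
have d_m1 := zdivides_mulXl d0 d_even.
have d_m2 : zdivides d (stern m.+2).
  have -> : stern m.+2 = stern m.+1 + stern m.+2 - stern m.+1 by rewrite addrC addKr.
  by rewrite -stern_doubleS; apply: zdividesB.
by apply: (IH m.+1) => //; lia.
Qed.

Definition stern_cross m m' := stern m.+1 * stern m'.+1 - stern m * stern m'.

Lemma stern_crossC m m' : stern_cross m m' = stern_cross m' m.
Proof. by rewrite /stern_cross mulrC [stern m * _]mulrC. Qed.

Lemma stern_cross_double m m' : stern_cross m.*2 m'.*2.+1 = 'X * stern_cross m m'.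
Proof.
by rewrite /stern_cross -doubleS !stern_double !stern_doubleS; ring.
Qed.

Lemma stern_cross_pow2 m m' k :
  (m + m' + 1 = 2 ^ k)%N -> stern_cross m m' = 'X ^+ k.
Proof.
elim: k m m' => [|k IH] m m' sum_pow2.
  have [-> ->] : m = 0%N /\ m' = 0%N by lia.
  by rewrite /stern_cross stern0 stern1 mulr0 subr0 mulr1.
wlog even_m : m m' sum_pow2 / ~~ odd m.
  move=> W; case/boolP: (odd m) => [odd_m|]; last exact: W.
  rewrite stern_crossC; apply: W; first by rewrite (addnC m').
  by move: sum_pow2; rewrite expnS; lia.
move: sum_pow2; rewrite expnS => sum_pow2.
have -> : m = m./2.*2 by lia.
have -> : m' = m'./2.*2.+1 by lia.
by rewrite stern_cross_double (IH m./2 m'./2) ?exprS //; lia.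
Qed.

Lemma stern_crossE m m' :
  stern_cross m m' = stern m'.*2.+1 * stern m.+1 - stern m.*2.+1 * stern m'.
Proof. by rewrite /stern_cross !stern_doubleS; ring. Qed.

Lemma zcoprime_stern_doubleS m m' k :
  (m + m' + 1 = 2 ^ k)%N -> zcoprime (stern m.*2.+1) (stern m'.*2.+1).
Proof.
move=> /stern_cross_pow2 cross_pow2 d d_a d_b.
apply: (zdivides_expX_unit (stern_doubleS_divisor_horner0 d_a) (k := k)).
by rewrite -cross_pow2 stern_crossE; apply: zdividesB; apply: zdividesMr.
Qed.

Theorem corollary2p6 :
  (forall n : nat, zcoprime (stern n) (stern n.+1)) /\
  (forall a b : nat, odd a -> odd b -> (0 < a)%N -> (0 < b)%N ->
     (exists n : nat, (a + b)%N = (2 ^ n)%N) ->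
     zcoprime (stern a) (stern b)).
Proof.
split; first exact: zcoprime_stern_succ.
move=> a b odd_a odd_b _ _ [[|k] sum_pow2]; first by move: sum_pow2; lia.
rewrite -(odd_double_half a) -(odd_double_half b) odd_a odd_b.
by apply: (@zcoprime_stern_doubleS _ _ k); move: sum_pow2; rewrite expnS; lia.
Qed.
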